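(* Assume that $R,\dot R,\ddot R,\dddot R$ satisfy the bicolored tetrahedron equations (BTE) for every $\sigma\in\mathbb{Z}/2\mathbb{Z}$ and all spectral parameters, and that $\dddot R^{[\sigma]}(r_1,r_2,r_3)$ is invertible for every $\sigma$ and all $r_1,r_2,r_3\in C$. Fix $L\ge 1$ and planes $1_1<\dots<1_{2L}$ with arbitrary parameters $r_{1_l}\in C$, and let $2<3<4$ be three further planes, all larger than every $1_l$, with arbitrary parameters $r_2,r_3,r_4\in C$. Then for every $\sigma\in\mathbb{Z}/2\mathbb{Z}$ the trace reductions satisfy the bicolored Yang--Baxter equation $$\mathbf{R}^{[\sigma]}_{23}\,\dot{\mathbf{R}}^{[\sigma+1]}_{24}\,\ddot{\mathbf{R}}^{[\sigma]}_{34}=\ddot{\mathbf{R}}^{[\sigma+1]}_{34}\,\dot{\mathbf{R}}^{[\sigma]}_{24}\,\mathbf{R}^{[\sigma+1]}_{23}$$ as operators on $\bigotimes_{l}\bigl(V_{(1_l2)}\otimes V_{(1_l3)}\otimes V_{(1_l4)}\bigr)$.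
   Context: Let $V$ be a finite-dimensional complex vector space and $C$ a set (of spectral parameters). Let $R,\dot R,\ddot R,\dddot R:\mathbb{Z}/2\mathbb{Z}\times C^3\to\mathrm{End}(V\otimes V\otimes V)$ be maps; write $X^{[\sigma]}(r_1,r_2,r_3)$ for the value of $X\in\{R,\dot R,\ddot R,\dddot R\}$ at $(\sigma,r_1,r_2,r_3)$. Superscript colors $[\sigma]$ are always read modulo 2. Notation: consider a finite totally ordered set of ''planes'', each plane $\alpha$ carrying a parameter $r_\alpha\in C$. For each pair $\alpha<\beta$ let $V_{(\alpha\beta)}$ be a copy of $V$. For $\alpha<\beta<\gamma$, $X^{[\sigma]}_{(\alpha\beta\gamma)}$ denotes the operator on the tensor product of all the spaces $V_{(\cdot\cdot)}$ under consideration that acts as $X^{[\sigma]}(r_\alpha,r_\beta,r_\gamma)$ on $V_{(\alpha\beta)}\otimes V_{(\alpha\gamma)}\otimes V_{(\beta\gamma)}$ (in this order) and as the identity on all other factors. Bicolored tetrahedron equations (BTE$[\sigma]$): for any four planes $1<2<3<4$ with arbitrary parameters $r_1,r_2,r_3,r_4\in C$, on $V_{(12)}\otimes V_{(13)}\otimes V_{(14)}\otimes V_{(23)}\otimes V_{(24)}\otimes V_{(34)}$, $$R^{[\sigma]}_{(123)}\dot R^{[\sigma+1]}_{(124)}\ddot R^{[\sigma]}_{(134)}\dddot R^{[\sigma+1]}_{(234)}=\dddot R^{[\sigma]}_{(234)}\ddot R^{[\sigma+1]}_{(134)}\dot R^{[\sigma]}_{(124)}R^{[\sigma+1]}_{(123)}.$$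 Trace reduction: given planes $1_1<\dots<1_{2L}$ and planes $\alpha<\beta$ larger than all $1_l$, define $$\mathbf{R}^{[\sigma]}_{\alpha\beta}:=\mathrm{Tr}_{V_{(\alpha\beta)}}\Bigl(R^{[\sigma+1]}_{(1_1\alpha\beta)}R^{[\sigma+2]}_{(1_2\alpha\beta)}\cdots R^{[\sigma+2L]}_{(1_{2L}\alpha\beta)}\Bigr),$$ the partial trace over the factor $V_{(\alpha\beta)}$, an operator on $\bigotimes_l\bigl(V_{(1_l\alpha)}\otimes V_{(1_l\beta)}\bigr)$ (extended by the identity to other factors). $\dot{\mathbf R}$, $\ddot{\mathbf R}$ are defined in the same way with $R$ replaced by $\dot R$, $\ddot R$. *)

(* Operators on tensor products of copies of V = K^d are
   represented by their matrix elements in the standard basis: a tensor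
   product of copies of V indexed by a finite set W of "wires" has basis
   {ffun W -> 'I_d}, and an operator is a function (out, in) -> K. *)
From HB Require Import structures.
From mathcomp Require Import all_boot all_order all_algebra.
From mathcomp Require Import reals.
From mathcomp Require Import complex.
Set Implicit Arguments. Unset Strict Implicit. Unset Printing Implicit Defensive.
Import Order.TTheory GRing.Theory Num.Theory.
Local Open Scope ring_scope.

Section Ops.
Variables (K : pzRingType) (d : nat).

Definition st (W : finType) := {ffun W -> 'I_d}.
Definition op (W : finType) := st W -> st W -> K.

Definition opmul (W : finType) (A B : op W) : op W :=
  fun x y => \sum_(z : st W) A x z * B z y.
Definition opid (W : finType) : op W := fun x y => (x == y)%:R.

Definition sel (W : finType) (a b c : W) (x : st W) : st 'I_3 :=
  [ffun i : 'I_3 => x (if val i == 0%N then a else if val i == 1%N then b else c)].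

Definition emb (W : finType) (X : op 'I_3) (a b c : W) : op W :=
  fun x y => X (sel a b c x) (sel a b c y) *
     ([forall w, ((w != a) && (w != b) && (w != c)) ==> (x w == y w)] : bool)%:R.

Definition invertible_op (W : finType) (X : op W) : Prop :=
  exists Y : op W, opmul X Y = @opid W /\ opmul Y X = @opid W.

Definition w12 : 'I_6 := @Ordinal 6 0 isT.
Definition w13 : 'I_6 := @Ordinal 6 1 isT.
Definition w14 : 'I_6 := @Ordinal 6 2 isT.
Definition w23 : 'I_6 := @Ordinal 6 3 isT.
Definition w24 : 'I_6 := @Ordinal 6 4 isT.
Definition w34 : 'I_6 := @Ordinal 6 5 isT.

Variable C : Type.
Definition opfamily := 'Z_2 -> C -> C -> C -> op 'I_3.

Definition BTE (R0 R1 R2 R3 : opfamily) (s : 'Z_2) : Prop :=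
  forall r1 r2 r3 r4 : C,
  opmul (emb (R0 s r1 r2 r3) w12 w13 w23)
   (opmul (emb (R1 (s + 1) r1 r2 r4) w12 w14 w24)
    (opmul (emb (R2 s r1 r3 r4) w13 w14 w34)
           (emb (R3 (s + 1) r2 r3 r4) w23 w24 w34)))
  =
  opmul (emb (R3 s r2 r3 r4) w23 w24 w34)
   (opmul (emb (R2 (s + 1) r1 r3 r4) w13 w14 w34)
    (opmul (emb (R1 s r1 r2 r4) w12 w14 w24)
           (emb (R0 (s + 1) r1 r2 r3) w12 w13 w23))).

(* ---- Trace reduction ----
   Planes 1_1 < ... < 1_n (indexed by l : 'I_n, parameters s l) and planes
   2<3<4 (indexed by j : 'I_3).  The target space is
   (x)_l (V_(1_l 2) (x) V_(1_l 3) (x) V_(1_l 4)), wire (l, j) = V_(1_l, j).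
   The auxiliary space V_(alpha beta) is the extra wire None of option W. *)
Definition W3 (n : nat) := ('I_n * 'I_3)%type.

Definition oprod (W : finType) (n : nat) (F : 'I_n -> op W) : op W :=
  foldr (fun l acc => opmul (F l) acc) (@opid W) (enum 'I_n).

Definition ext (n : nat) (x : st (W3 n)) (t : 'I_d) : st (option (W3 n)) :=
  [ffun w => if w is Some w' then x w' else t].

(* bold X^[sg]_{alpha beta} = Tr_{V_(alpha beta)} (X^[sg+1]_(1_1 alpha beta) ... X^[sg+n]_(1_n alpha beta)) *)
Definition trred (X : opfamily) (n : nat) (s : 'I_n -> C) (ra rb : C)
    (a b : 'I_3) (sg : 'Z_2) : op (W3 n) :=
  fun x y => \sum_(t : 'I_d)
    oprod (fun l : 'I_n =>
             emb (X (sg + (l.+1)%:R) (s l) ra rb)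
                 (Some (l, a)) (Some (l, b)) None) (ext x t) (ext y t).

End Ops.

Definition j2 : 'I_3 := @Ordinal 3 0 isT.
Definition j3 : 'I_3 := @Ordinal 3 1 isT.
Definition j4 : 'I_3 := @Ordinal 3 2 isT.

From HB Require Import structures.
From mathcomp Require Import all_boot all_order all_algebra.
From mathcomp Require Import reals complex.
From Stdlib Require Import FunctionalExtensionality.
(* Fix the states of the outer wires (1_l 2), (1_l 3), (1_l 4) of every plane 1_l.
   A trace reduction then becomes the trace of an ordered product, over the layers
   l, of matrices acting on the traced wire, so the product of three trace
   reductions is the trace, on the inner wires (23), (24), (34), of the ordered
   product over l of the blocks of the slab operators R_(1_l 2 3) Rd_(1_l 2 4)
   Rdd_(1_l 3 4). The tetrahedron equation for 1_l < 2 < 3 < 4 says that Rddd_(234)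
   intertwines the block of each left slab with that of the corresponding right
   slab, shifting the colour of Rddd by one. Along the 2L layers these relations
   telescope; since 2L is even the two extreme Rddd factors coincide, and being
   invertible they cancel under the trace. *)

Set Implicit Arguments. Unset Strict Implicit. Unset Printing Implicit Defensive.
Import GRing.Theory.
Local Open Scope ring_scope.

Section MatrixAlgebra.
Variables (K : pzRingType) (I : finType).

Definition mat := I -> I -> K.
Definition mmul (A B : mat) : mat := fun x y => \sum_z A x z * B z y.
Definition mid : mat := fun x y => (x == y)%:R.
Definition madd (A B : mat) : mat := fun x y => A x y + B x y.
Definition mzero : mat := fun _ _ => 0.
Definition mtr (A : mat) : K := \sum_x A x x.

Lemma matP (A B : mat) : (forall x y, A x y = B x y) -> A = B.
Proof.
by move=> eqAB; do 2!apply: functional_extensionality => ?; apply: eqAB.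
Qed.

Lemma mmulA : associative mmul.
Proof.
move=> A B C; apply: matP => x y; rewrite /mmul.
under eq_bigr do rewrite big_distrr /=.
rewrite exchange_big /=; apply: eq_bigr => w _; rewrite big_distrl /=.
by apply: eq_bigr => z _; rewrite mulrA.
Qed.

Lemma mmul1m : left_id mid mmul.
Proof.
move=> A; apply: matP => x y; rewrite /mmul /mid (bigD1 x) //= eqxx mul1r.
by rewrite big1 ?addr0 // => z /negbTE; rewrite eq_sym => ->; rewrite mul0r.
Qed.

Lemma mmulm1 : right_id mid mmul.
Proof.
move=> A; apply: matP => x y; rewrite /mmul /mid (bigD1 y) //= eqxx mulr1.
by rewrite big1 ?addr0 // => z /negbTE ->; rewrite mulr0.
Qed.

Lemma mmul0m : left_zero mzero mmul.
Proof. by move=> A; apply: matP => x y; rewrite /mmul big1 // => z _; rewrite mul0r. Qed.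

Lemma mmulm0 : right_zero mzero mmul.
Proof. by move=> A; apply: matP => x y; rewrite /mmul big1 // => z _; rewrite mulr0. Qed.

Lemma maddA : associative madd.
Proof. by move=> A B C; apply: matP => x y; rewrite /madd addrA. Qed.

Lemma maddC : commutative madd.
Proof. by move=> A B; apply: matP => x y; rewrite /madd addrC. Qed.

Lemma madd0m : left_id mzero madd.
Proof. by move=> A; apply: matP => x y; rewrite /madd add0r. Qed.

Lemma mmulDl : left_distributive mmul madd.
Proof.
move=> A B C; apply: matP => x y; rewrite /mmul /madd -big_split /=.
by apply: eq_bigr => z _; rewrite mulrDl.
Qed.

Lemma mmulDr : right_distributive mmul madd.
Proof.
move=> A B C; apply: matP => x y; rewrite /mmul /madd -big_split /=.
by apply: eq_bigr => z _; rewrite mulrDr.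
Qed.

HB.instance Definition _ := Monoid.isLaw.Build mat mid mmul mmulA mmul1m mmulm1.
HB.instance Definition _ := Monoid.isMulLaw.Build mat mzero mmul mmul0m mmulm0.
HB.instance Definition _ := Monoid.isComLaw.Build mat mzero madd maddA maddC madd0m.
HB.instance Definition _ := Monoid.isAddLaw.Build mat mmul madd mmulDl mmulDr.

Lemma msumE (J : Type) (r : seq J) (P : pred J) (F : J -> mat) x y :
  (\big[madd/mzero]_(j <- r | P j) F j) x y = \sum_(j <- r | P j) F j x y.
Proof. by apply: (big_morph (fun A : mat => A x y)). Qed.

Lemma mtr_sum (J : Type) (r : seq J) (P : pred J) (F : J -> mat) :
  mtr (\big[madd/mzero]_(j <- r | P j) F j) = \sum_(j <- r | P j) mtr (F j).
Proof. by apply: big_morph => [A B|]; [apply: big_split | apply: big1_eq]. Qed.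

Lemma mprod_intertwine n (F G : 'I_n -> mat) (T : nat -> mat) :
  (forall l : 'I_n, mmul (F l) (T l.+1) = mmul (T l) (G l)) ->
  mmul (\big[mmul/mid]_(l < n) F l) (T n) = mmul (T 0%N) (\big[mmul/mid]_(l < n) G l).
Proof.
elim: n F G T => [|n IHn] F G T FTG; first by rewrite !big_ord0 mmul1m mmulm1.
rewrite !big_ord_recl -mmulA.
rewrite (IHn (F \o lift ord0) (G \o lift ord0) (fun k => T k.+1)) => [|l]; last exact: FTG.
by rewrite mmulA FTG mmulA.
Qed.

End MatrixAlgebra.

Arguments mmul {K I}.
Arguments madd {K I}.
Arguments mid {K I}.
Arguments mzero {K I}.

Section CommutativeMatrices.
Variables (K : comPzRingType) (I : finType).

Lemma mtr_mmulC (A B : mat K I) : mtr (mmul A B) = mtr (mmul B A).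
Proof.
rewrite /mtr /mmul exchange_big /=.
by apply: eq_bigr => x _; apply: eq_bigr => y _; rewrite mulrC.
Qed.

Lemma mtr_intertwined (P Q T T' : mat K I) :
  mmul P T = mmul T Q -> mmul T T' = mid -> mmul T' T = mid -> mtr P = mtr Q.
Proof.
move=> PTQ TT' T'T.
by rewrite -[P]mmulm1 -TT' mmulA PTQ -mmulA mtr_mmulC -mmulA T'T mmulm1.
Qed.

Variable J : finType.

Definition mtensor (M : J -> mat K I) : mat K {ffun J -> I} :=
  fun u v => \prod_j M j (u j) (v j).

Lemma mtensor_mul (M N : J -> mat K I) :
  mmul (mtensor M) (mtensor N) = mtensor (fun j => mmul (M j) (N j)).
Proof.
apply: matP => u v; rewrite /mtensor /mmul bigA_distr_bigA /=.
by apply: eq_bigr => w _; rewrite -big_split.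
Qed.

Lemma mtensor1 : mtensor (fun=> mid) = mid.
Proof.
apply: matP => u v; rewrite /mtensor /mid; have [->|] := eqVneq u v.
  by rewrite big1 // => j _; rewrite eqxx.
move=> uv; have /forallPn[j /negbTE uvj] : ~~ [forall j, u j == v j].
  by apply: contra uv => /forallP eq_uv; apply/eqP/ffunP => j; apply/eqP.
by rewrite (bigD1 j) //= uvj mul0r.
Qed.

Lemma mprod_tensor (L : Type) (r : seq L) (M : L -> J -> mat K I) :
  \big[mmul/mid]_(l <- r) mtensor (M l)
  = mtensor (fun j => \big[mmul/mid]_(l <- r) M l j).
Proof.
elim: r => [|l r IHr].
  rewrite big_nil -mtensor1; congr mtensor; apply: functional_extensionality => j.
  by rewrite big_nil.
rewrite big_cons IHr mtensor_mul; congr mtensor; apply: functional_extensionality => j.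
by rewrite big_cons.
Qed.

Lemma mtr_tensor (M : J -> mat K I) : mtr (mtensor M) = \prod_j mtr (M j).
Proof. by rewrite /mtr /mtensor bigA_distr_bigA. Qed.

Definition place (i : J) (A : mat K I) (j : J) : mat K I := if j == i then A else mid.

Lemma mtensor_place (i : J) (A : mat K I) u v :
  mtensor (place i A) u v = A (u i) (v i) * [forall j, (j != i) ==> (u j == v j)]%:R.
Proof.
rewrite /mtensor (bigD1 i) //= /place eqxx; congr (_ * _).
have [/forallP eq_uv | /forallPn[j]] := boolP [forall j, (j != i) ==> (u j == v j)]; last first.
  rewrite negb_imply => /andP[ji /negbTE uvj].
  by rewrite (bigD1 j) //= (negbTE ji) /mid uvj mul0r.
by rewrite big1 // => j ji; rewrite (negbTE ji) /mid (implyP (eq_uv j) ji).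
Qed.

End CommutativeMatrices.

Lemma prod_ord3_uniq (K : comPzRingType) (F : 'I_3 -> K) (i1 i2 i3 : 'I_3) :
  uniq [:: i1; i2; i3] -> \prod_j F j = F i1 * F i2 * F i3.
Proof.
move=> uniq_i; have [_ eq_i] := uniq_min_size uniq_i (fun j _ => mem_enum 'I_3 j)
  (eq_leq (size_enum_ord 3)).
rewrite [index_enum _]unlock -enumT (perm_big [:: i1; i2; i3]) ?uniq_perm ?enum_uniq //.
by rewrite !big_cons big_nil /= mulr1 mulrA.
Qed.

Lemma forall_split m k (P : 'I_(m + k) -> bool) :
  [forall w, P w] = [forall j, P (lshift k j)] && [forall j, P (rshift m j)].
Proof.
apply/forallP/andP => [allP | [/forallP allPl /forallP allPr] w].
  by split; apply/forallP => j.
by case: (split_ordP w) => j ->.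
Qed.

Definition triple d (a b c : 'I_d) : st d 'I_3 :=
  [ffun i : 'I_3 => if val i == 0%N then a else if val i == 1%N then b else c].

Lemma selE d (W : finType) (a b c : W) (x : st d W) :
  sel a b c x = triple (x a) (x b) (x c).
Proof. by apply/ffunP => i; rewrite !ffunE; case: ifP => // _; case: ifP. Qed.

Lemma tripleE d (u : st d 'I_3) : triple (u j2) (u j3) (u j4) = u.
Proof. by apply/ffunP => -[[|[|[|?]]] ?] //; rewrite ffunE /=; congr (u _); apply: val_inj. Qed.

Lemma ord3_cover (j : 'I_3) : (j != j2) && (j != j3) && (j != j4) = false.
Proof. by case: j => [[|[|[|?]]] ?]. Qed.

Section Blocks.
Variables (K : comPzRingType) (d m k : nat).

Definition cat_st (p : st d 'I_m) (u : st d 'I_k) : st d 'I_(m + k) :=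
  [ffun w => match split w with inl j => p j | inr j => u j end].

Lemma cat_st_lshift p u j : cat_st p u (lshift k j) = p j.
Proof. by rewrite ffunE (unsplitK (inl _ j)). Qed.

Lemma cat_st_rshift p u j : cat_st p u (rshift m j) = u j.
Proof. by rewrite ffunE (unsplitK (inr _ j)). Qed.

Lemma sum_cat_st (F : st d 'I_(m + k) -> K) :
  \sum_z F z = \sum_p \sum_u F (cat_st p u).
Proof.
rewrite pair_big /= (reindex (fun pu => cat_st pu.1 pu.2)) //=.
exists (fun z => ([ffun j => z (lshift k j)], [ffun j => z (rshift m j)])).
  by move=> [p u] _; congr pair; apply/ffunP => j; rewrite ffunE ?cat_st_lshift ?cat_st_rshift.
move=> z _; apply/ffunP => w /=.
by case: (split_ordP w) => j ->; rewrite ?cat_st_lshift ?cat_st_rshift ffunE.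
Qed.

(* The matrix of [G] on the inner wires, between the outer states [p] and [q]. *)
Definition block (G : op K d 'I_(m + k)) (p q : st d 'I_m) : mat K (st d 'I_k) :=
  fun u v => G (cat_st p u) (cat_st q v).

Lemma block_mul (G G' : op K d 'I_(m + k)) p q :
  block (opmul G G') p q = \big[madd/mzero]_r mmul (block G p r) (block G' r q).
Proof. by apply: matP => u v; rewrite msumE /block /opmul sum_cat_st. Qed.

Definition agree_off (a b : 'I_m) (p q : st d 'I_m) : bool :=
  [forall j, (j != a) && (j != b) ==> (p j == q j)].

(* [X] acts on the outer wires [a], [b] and on one inner wire; this is its matrix on
   that inner wire, the remaining outer wires being forced to agree. *)
Definition aux_block (X : op K d 'I_3) (a b : 'I_m) (p q : st d 'I_m) : mat K 'I_d :=
  fun t t' => (agree_off a b p q)%:R * X (triple (p a) (p b) t) (triple (q a) (q b) t').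

Lemma block_emb (X : op K d 'I_3) (a b : 'I_m) (i : 'I_k) p q :
  block (emb X (lshift k a) (lshift k b) (rshift m i)) p q
  = mtensor (place i (aux_block X a b p q)).
Proof.
apply: matP => u v; rewrite mtensor_place /block /emb !selE.
rewrite !cat_st_lshift !cat_st_rshift forall_split /aux_block.
under eq_forallb => j do rewrite !eq_shift !cat_st_lshift !andbT.
under [X in _ && X]eq_forallb => j do rewrite !eq_shift !cat_st_rshift.
by rewrite -/(agree_off a b p q) -mulnb natrM mulrCA !mulrA.
Qed.

End Blocks.

Lemma block_emb_aux (K : comPzRingType) d m (T : op K d 'I_3) (p q : st d 'I_m) :
  block (emb T (rshift m j2) (rshift m j3) (rshift m j4)) p q = if p == q then T else mzero.
Proof.
apply: matP => u v; rewrite /block /emb !selE !cat_st_rshift !tripleE forall_split.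
under eq_forallb => j do rewrite !eq_shift !cat_st_lshift /=.
under [X in _ && X]eq_forallb => j do rewrite !eq_shift ord3_cover.
rewrite [X in _ && X](_ : _ = true); last exact/forallP.
have -> : [forall j, p j == q j] = (p == q).
  by apply/forallP/eqP => [eq_pq|-> //]; apply/ffunP => j; apply/eqP.
by case: (p == q); rewrite ?mulr1 ?mulr0.
Qed.

Lemma forall_option (T : finType) (P : option T -> bool) :
  [forall w, P w] = P None && [forall w, P (Some w)].
Proof.
apply/forallP/andP => [allP | [PN /forallP allP] [w|] //].
by split; last apply/forallP.
Qed.

Section Layers.
Variables (K : comPzRingType) (d n : nat).
Local Notation W := (W3 n).
Implicit Types (x y z : st d W) (l : 'I_n) (p : st d 'I_3).

Definition slice x l : st d 'I_3 := [ffun j => x (l, j)].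
Definition setslice x l p : st d W := [ffun w => if w.1 == l then p w.2 else x w].

Lemma slice_setslice x l p l' :
  slice (setslice x l p) l' = if l' == l then p else slice x l'.
Proof. by apply/ffunP => j; rewrite !ffunE /=; case: (l' == l); rewrite ?ffunE. Qed.

Lemma ext_inj_eq x y (t t' : 'I_d) : (ext x t == ext y t') = (x == y) && (t == t').
Proof.
apply/eqP/andP => [/ffunP eq_ext | [/eqP-> /eqP->] //]; split; apply/eqP.
  by apply/ffunP => w; have := eq_ext (Some w); rewrite !ffunE.
by have := eq_ext None; rewrite !ffunE.
Qed.

Lemma sum_ext (F : st d (option W) -> K) : \sum_z F z = \sum_x \sum_t F (ext x t).
Proof.
rewrite pair_big /= (reindex (fun xt => ext xt.1 xt.2)) //=.
exists (fun z : st d (option W) => ([ffun w => z (Some w)], z None)).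
  by move=> [x t] _ /=; congr pair; [apply/ffunP => w|]; rewrite !ffunE.
by move=> z _; apply/ffunP => -[w|]; rewrite !ffunE.
Qed.

Lemma sum_off_slice x l (F : st d W -> K) :
  \sum_(z : st d W) [forall w : W, (w.1 != l) ==> (x w == z w)]%:R * F z
  = \sum_(p : st d 'I_3) F (setslice x l p).
Proof.
under eq_bigr do rewrite mulr_natl mulrb.
rewrite -big_mkcond (reindex_onto (setslice x l) (slice^~ l)) /=.
  apply: eq_bigl => p; rewrite slice_setslice !eqxx andbT.
  by apply/forallP => w; rewrite ffunE; apply/implyP => /negbTE ->.
move=> z /forallP agree_xz; apply/ffunP => w; rewrite !ffunE.
have [<-|/(implyP (agree_xz w))/eqP //] := eqVneq w.1 l.
by rewrite -surjective_pairing.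
Qed.

Lemma forall_off_cells x z l (a b : 'I_3) :
  [forall w : W, (w != (l, a)) && (w != (l, b)) ==> (x w == z w)]
  = [forall w : W, (w.1 != l) ==> (x w == z w)] && agree_off a b (slice x l) (slice z l).
Proof.
apply/forallP/andP => [agree_xz | [/forallP off_l /forallP on_l] [l' j]].
  split; apply/forallP.
    move=> [l' j]; apply/implyP => /= ll'; apply: (implyP (agree_xz (l', j))).
    by rewrite !xpair_eqE (negbTE ll').
  move=> j; apply/implyP => ab_j; rewrite !ffunE; apply: (implyP (agree_xz (l, j))).
  by rewrite !xpair_eqE eqxx.
rewrite !xpair_eqE; have [-> /=|ll'] := eqVneq l' l; last first.
  exact: implyP (off_l (l', j)) ll'.
by have := on_l j; rewrite !ffunE.
Qed.

Lemma emb_ext (X : op K d 'I_3) l (a b : 'I_3) x z t u :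
  emb X (Some (l, a)) (Some (l, b)) None (ext x t) (ext z u)
  = [forall w : W, (w.1 != l) ==> (x w == z w)]%:R
    * aux_block X a b (slice x l) (slice z l) t u.
Proof.
rewrite /emb !selE /aux_block !ffunE forall_option /=.
under eq_forallb => w do rewrite !ffunE andbT !(inj_eq (@Some_inj _)).
by rewrite forall_off_cells -mulnb natrM mulrC mulrA.
Qed.

Lemma setslice_agree x y l p (s : seq 'I_n) : l \notin s ->
  [forall w : W, (w.1 \notin s) ==> (setslice x l p w == y w)]
  = (p == slice y l) && [forall w : W, (w.1 \notin l :: s) ==> (x w == y w)].
Proof.
move=> ls; apply/forallP/andP => [agree | [/eqP-> /forallP agree] w].
  split.
    apply/eqP/ffunP => j; have := agree (l, j).
    by rewrite /= ls !ffunE eqxx => /eqP.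
  apply/forallP => w; rewrite in_cons negb_or; apply/implyP => /andP [wl ws].
  by have := implyP (agree w) ws; rewrite ffunE (negbTE wl).
rewrite ffunE; have [wl|wl] := eqVneq w.1 l.
  by rewrite ffunE -wl -surjective_pairing eqxx implybT.
apply/implyP => ws; apply: (implyP (agree w)).
by rewrite in_cons negb_or wl ws.
Qed.

Lemma layers_ext (F : 'I_n -> op K d 'I_3) (a b : 'I_3) (s : seq 'I_n) x y t t' :
  uniq s ->
  (\big[mmul/mid]_(l <- s) emb (F l) (Some (l, a)) (Some (l, b)) None) (ext x t) (ext y t')
  = [forall w : W, (w.1 \notin s) ==> (x w == y w)]%:R
    * (\big[mmul/mid]_(l <- s) aux_block (F l) a b (slice x l) (slice y l)) t t'.
Proof.
elim: s x t => [|l s IHs] x t.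
  move=> _; rewrite !big_nil /mid ext_inj_eq -natrM mulnb; congr (_ && _)%:R.
  apply/eqP/forallP => [-> w|eq_xy]; first by rewrite eqxx implybT.
  by apply/ffunP => w; apply/eqP/eq_xy.
case/andP => ls us; rewrite !big_cons {1}/mmul sum_ext.
have off_l p : \big[mmul/mid]_(l' <- s) aux_block (F l') a b (slice (setslice x l p) l') (slice y l')
             = \big[mmul/mid]_(l' <- s) aux_block (F l') a b (slice x l') (slice y l').
  apply: eq_big_seq => l' l's; rewrite slice_setslice.
  by case: eqVneq l's ls => [-> ->|].
transitivity (\sum_(z : st d W) [forall w : W, (w.1 != l) ==> (x w == z w)]%:R *
  \sum_u aux_block (F l) a b (slice x l) (slice z l) t u
     * ([forall w : W, (w.1 \notin s) ==> (z w == y w)]%:R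
        * (\big[mmul/mid]_(l' <- s) aux_block (F l') a b (slice z l') (slice y l')) u t')).
  apply: eq_bigr => z _; rewrite mulr_sumr; apply: eq_bigr => u _.
  by rewrite emb_ext IHs // !mulrA.
rewrite (sum_off_slice x l) (bigD1 (slice y l)) //= [X in _ + X]big1 ?addr0; last first.
  move=> p /negbTE py; apply: big1 => u _.
  by rewrite setslice_agree // py mul0r mulr0.
rewrite {2}/mmul big_distrr /=; apply: eq_bigr => u _.
by rewrite setslice_agree // eqxx off_l slice_setslice eqxx mulrCA.
Qed.

Definition layer_trace (F : 'I_n -> op K d 'I_3) (a b : 'I_3) : op K d W :=
  fun x y => mtr (\big[mmul/mid]_(l < n) aux_block (F l) a b (slice x l) (slice y l)).

Lemma trredE (C : Type) (X : opfamily K d C) (s : 'I_n -> C) ra rb a b sg :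
  trred X s ra rb a b sg = layer_trace (fun l => X (sg + l.+1%:R) (s l) ra rb) a b.
Proof.
apply: matP => x y; rewrite /trred /layer_trace /mtr; apply: eq_bigr => t _.
have -> : oprod (fun l => emb (X (sg + l.+1%:R) (s l) ra rb) (Some (l, a)) (Some (l, b)) None)
  = \big[mmul/mid]_(l <- enum 'I_n) emb (X (sg + l.+1%:R) (s l) ra rb) (Some (l, a)) (Some (l, b)) None.
  by rewrite unlock.
rewrite layers_ext ?enum_uniq // [index_enum _]unlock -enumT.
rewrite (_ : [forall w : W, _] = true) ?mul1r //.
by apply/forallP => w; rewrite mem_enum.
Qed.

End Layers.

Section ThreeLayers.
Variables (K : comPzRingType) (d n : nat).
Local Notation W := (W3 n).
Local Notation st3 := (st d 'I_3).

Definition glue (P : 'I_n -> st3) : st d W := [ffun w => P w.1 w.2].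

Lemma slice_glue P l : slice (glue P) l = P l.
Proof. by apply/ffunP => j; rewrite !ffunE. Qed.

Lemma sum_glue2 (f : st d W * st d W -> K) :
  \sum_zz f zz
  = \sum_(Z : {ffun 'I_n -> st3 * st3}) f (glue (fun l => (Z l).1), glue (fun l => (Z l).2)).
Proof.
rewrite (reindex (fun Z : {ffun 'I_n -> st3 * st3} =>
                    (glue (fun l => (Z l).1), glue (fun l => (Z l).2)))) //=.
exists (fun zz => [ffun l => (slice zz.1 l, slice zz.2 l)]).
  move=> Z _; apply/ffunP => l; rewrite ffunE !slice_glue.
  by case: (Z l).
by move=> [z1 z2] _; congr pair; apply/ffunP => -[l j]; rewrite !ffunE.
Qed.

Lemma place_at (I J : finType) (i : J) (A : mat K I) : place i A i = A.
Proof. by rewrite /place eqxx. Qed.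

Lemma place_off (I J : finType) (i j : J) (A : mat K I) : j != i -> place i A j = mid.
Proof. by rewrite /place => /negbTE ->. Qed.

Variables (F1 F2 F3 : 'I_n -> op K d 'I_3) (a1 b1 a2 b2 a3 b3 i1 i2 i3 : 'I_3).
Hypothesis uniq_i : uniq [:: i1; i2; i3].

Local Notation E1 l := (emb (F1 l) (lshift 3 a1) (lshift 3 b1) (rshift 3 i1)).
Local Notation E2 l := (emb (F2 l) (lshift 3 a2) (lshift 3 b2) (rshift 3 i2)).
Local Notation E3 l := (emb (F3 l) (lshift 3 a3) (lshift 3 b3) (rshift 3 i3)).

Lemma block_emb3 l (p q : st3) :
  block (opmul (E1 l) (opmul (E2 l) (E3 l))) p q
  = \big[madd/mzero]_(r : st3 * st3)
      mtensor (fun j => mmul (place i1 (aux_block (F1 l) a1 b1 p r.1) j)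
                        (mmul (place i2 (aux_block (F2 l) a2 b2 r.1 r.2) j)
                              (place i3 (aux_block (F3 l) a3 b3 r.2 q) j))).
Proof.
rewrite block_mul; under eq_bigr => r1 _ do rewrite block_mul big_distrr /=.
rewrite pair_big /=; apply: eq_bigr => -[r1 r2] _ /=.
by rewrite !block_emb !mtensor_mul.
Qed.

Lemma layer_trace_mul3 x y :
  opmul (layer_trace F1 a1 b1) (opmul (layer_trace F2 a2 b2) (layer_trace F3 a3 b3)) x y
  = mtr (\big[mmul/mid]_(l < n)
           block (opmul (E1 l) (opmul (E2 l) (E3 l))) (slice x l) (slice y l)).
Proof.
have [i12 i13 i23] : [/\ i1 != i2, i1 != i3 & i2 != i3].
  by move: uniq_i; rewrite /= !inE !negb_or => /and3P[/andP[-> ->] -> _].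
have [i21 i31 i32] : [/\ i2 != i1, i3 != i1 & i3 != i2] by split; rewrite eq_sym.
rewrite (eq_bigr _ (fun l _ => block_emb3 l (slice x l) (slice y l))).
rewrite bigA_distr_bigA mtr_sum /opmul.
under eq_bigr => z1 _ do rewrite mulr_sumr.
rewrite pair_bigA sum_glue2; apply: eq_bigr => Z _ /=.
rewrite mprod_tensor mtr_tensor (prod_ord3_uniq _ uniq_i) /layer_trace mulrA.
by congr (_ * _ * _); congr mtr; apply: eq_bigr => l _;
  rewrite !slice_glue !place_at !place_off // ?mmul1m ?mmulm1.
Qed.

End ThreeLayers.

Arguments layer_trace_mul3 {K d n F1 F2 F3 a1 b1 a2 b2 a3 b3 i1 i2 i3}.

Section Slabs.
Variables (K : comPzRingType) (d m : nat).
Local Notation aux_wires T := (emb T (rshift m j2) (rshift m j3) (rshift m j4)).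

Lemma block_mul_aux_r (G : op K d 'I_(m + 3)) (T : op K d 'I_3) p q :
  block (opmul G (aux_wires T)) p q = mmul (block G p q) T.
Proof.
rewrite block_mul (bigD1 q) //= block_emb_aux eqxx big1 ?Monoid.mulm1 // => r /negbTE rq.
by rewrite block_emb_aux rq mmulm0.
Qed.

Lemma block_mul_aux_l (G : op K d 'I_(m + 3)) (T : op K d 'I_3) p q :
  block (opmul (aux_wires T) G) p q = mmul T (block G p q).
Proof.
rewrite block_mul (bigD1 p) //= block_emb_aux eqxx big1 ?Monoid.mulm1 // => r /negbTE rp.
by rewrite block_emb_aux eq_sym rp mmul0m.
Qed.

End Slabs.

Lemma outer_wiresE : [/\ w12 = lshift 3 j2, w13 = lshift 3 j3 & w14 = lshift 3 j4].
Proof. by split; apply: val_inj. Qed.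

Lemma inner_wiresE : [/\ w23 = rshift 3 j2, w24 = rshift 3 j3 & w34 = rshift 3 j4].
Proof. by split; apply: val_inj. Qed.

Lemma block_BTE (K : comPzRingType) d (C : Type) (R0 R1 R2 R3 : opfamily K d C)
    (c : 'Z_2) r1 r2 r3 r4 p q :
  BTE R0 R1 R2 R3 c ->
  mmul (block (opmul (emb (R0 c r1 r2 r3) (lshift 3 j2) (lshift 3 j3) (rshift 3 j2))
              (opmul (emb (R1 (c + 1) r1 r2 r4) (lshift 3 j2) (lshift 3 j4) (rshift 3 j3))
                     (emb (R2 c r1 r3 r4) (lshift 3 j3) (lshift 3 j4) (rshift 3 j4)))) p q)
       (R3 (c + 1) r2 r3 r4)
  = mmul (R3 c r2 r3 r4)
      (block (opmul (emb (R2 (c + 1) r1 r3 r4) (lshift 3 j3) (lshift 3 j4) (rshift 3 j4))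
             (opmul (emb (R1 c r1 r2 r4) (lshift 3 j2) (lshift 3 j4) (rshift 3 j3))
                    (emb (R0 (c + 1) r1 r2 r3) (lshift 3 j2) (lshift 3 j3) (rshift 3 j2)))) p q).
Proof.
move/(_ r1 r2 r3 r4); case: outer_wiresE inner_wiresE => -> -> -> [-> -> ->] bte.
have opmulA W : associative (@opmul K d W) := @mmulA K (st d W).
by rewrite -block_mul_aux_r -block_mul_aux_l -!opmulA bte.
Qed.

Theorem trred_bicolored_YBE (K : comPzRingType) (d : nat) (C : Type)
  (Rm Rd Rdd Rddd : opfamily K d C) :
  (forall s : 'Z_2, BTE Rm Rd Rdd Rddd s) ->
  (forall (s : 'Z_2) (r1 r2 r3 : C), invertible_op (Rddd s r1 r2 r3)) ->
  forall (L : nat) (s1 : 'I_(2 * L) -> C) (r2 r3 r4 : C) (sg : 'Z_2),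
  opmul (trred Rm s1 r2 r3 j2 j3 sg)
    (opmul (trred Rd s1 r2 r4 j2 j4 (sg + 1)) (trred Rdd s1 r3 r4 j3 j4 sg))
  =
  opmul (trred Rdd s1 r3 r4 j3 j4 (sg + 1))
    (opmul (trred Rd s1 r2 r4 j2 j4 sg) (trred Rm s1 r2 r3 j2 j3 (sg + 1))).
Proof.
move=> bte inv L s1 r2 r3 r4 sg.
pose T k := Rddd (sg + k.+1%:R) r2 r3 r4.
have [T' [TT' T'T]] := inv (sg + 1) r2 r3 r4.
(* Only the parity of the number of layers matters: L = 0 is allowed. *)
have T_period : T (2 * L)%N = T 0%N.
  by rewrite /T -natr1 natrM (_ : 2%:R = 0 :> 'Z_2) ?mul0r ?add0r //; apply/eqP.
apply: matP => x y; rewrite !trredE.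
rewrite (layer_trace_mul3 (isT : uniq [:: j2; j3; j4])).
rewrite (layer_trace_mul3 (isT : uniq [:: j4; j3; j2])).
apply: (mtr_intertwined _ TT' T'T); rewrite -[Rddd _ _ _ _]/(T 0%N) -{1}T_period.
apply: mprod_intertwine => l.
have shift1 : sg + 1 + l.+1%:R = sg + l.+1%:R + 1 by rewrite addrAC.
have shift2 : sg + l.+2%:R = sg + l.+1%:R + 1 by rewrite -natr1 addrA.
by rewrite /T shift1 shift2; apply: block_BTE.
Qed.

Import ComplexField.
Local Open Scope complex_scope.

Theorem mainTheorem1 (R : realType) (d : nat) (C : Type)
  (Rm Rd Rdd Rddd : opfamily (complex R) d C) :
  (forall s : 'Z_2, BTE Rm Rd Rdd Rddd s) ->
  (forall (s : 'Z_2) (r1 r2 r3 : C), invertible_op (Rddd s r1 r2 r3)) ->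
  forall (L : nat), (1 <= L)%N ->
  forall (s1 : 'I_(2 * L) -> C) (r2 r3 r4 : C) (sg : 'Z_2),
  opmul (trred Rm s1 r2 r3 j2 j3 sg)
    (opmul (trred Rd s1 r2 r4 j2 j4 (sg + 1))
           (trred Rdd s1 r3 r4 j3 j4 sg))
  =
  opmul (trred Rdd s1 r3 r4 j3 j4 (sg + 1))
    (opmul (trred Rd s1 r2 r4 j2 j4 sg)
           (trred Rm s1 r2 r3 j2 j3 (sg + 1))).
Proof. by move=> bte inv L _; apply: trred_bicolored_YBE. Qed.
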